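(* Let $f,g\in L^2(\mathbb{R})$ and write $V=V(f,g)=U+iW$ with $U,W$ real-valued. Assume that $V(x_0,\omega_0)=0$ and $\det J_V(x_0,\omega_0)\neq 0$, where \[ J_V(x_0,\omega_0)=\begin{pmatrix} U_x(x_0,\omega_0) & U_\omega(x_0,\omega_0)\\ W_x(x_0,\omega_0) & W_\omega(x_0,\omega_0)\end{pmatrix}, \] and let $\psi(x,\omega)=\arg V(x,\omega)$ denote a (local differentiable) phase of $V$. (i) If $V\in C^2(\mathbb{R}^2,\mathbb{R}^2)$, then \[ \lim_{x\to x_0}\frac{\partial\psi}{\partial\omega}(x,\omega_0)=\begin{cases}-\infty, & x\to x_0\text{ from the left},\\ +\infty, & x\to x_0\text{ from the right},\end{cases} \] if $\det J_V(x_0,\omega_0)>0$, and \[ \lim_{x\to x_0}\frac{\partial\psi}{\partial\omega}(x,\omega_0)=\begin{cases}+\infty, & x\to x_0\text{ from the left},\\ -\infty, & x\to x_0\text{ from the right},\end{cases} \] if $\det J_V(x_0,\omega_0)<0$. (ii) If $V\in C^3(\mathbb{R}^2,\mathbb{R}^2)$, then $\lim_{\omega\to\omega_0}\frac{\partial\psi}{\partial\omega}(x_0,\omega)=c'$ for some real number $c'\in\mathbb{R}$.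
   Context: The short-time Fourier transform is $V(f,g)(x,\omega)=\int_{\mathbb{R}} f(t)\overline{g(t-x)}e^{-2\pi i\omega t}\,dt$, regarded as a map $\mathbb{R}^2\to\mathbb{R}^2\cong\mathbb{C}$; $C^k$ refers to real differentiability in $(x,\omega)$ and subscripts denote partial derivatives. At points where $V\neq 0$, a differentiable phase $\psi$ with $V=|V|e^{i\psi}$ exists locally, is unique up to an additive constant in $2\pi\mathbb{Z}$, and its partial derivative is $\frac{\partial\psi}{\partial\omega}=\frac{U W_\omega-W U_\omega}{U^2+W^2}$ (independent of the choice of phase). *)

From HB Require Import structures.
From mathcomp Require Import all_boot all_order all_algebra.
From mathcomp Require Import all_classical all_reals all_analysis.
Set Implicit Arguments. Unset Strict Implicit. Unset Printing Implicit Defensive.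
Import Order.TTheory GRing.Theory Num.Theory.
Import numFieldNormedType.Exports.
Local Open Scope classical_set_scope.
Local Open Scope ring_scope.

Section Defs.
Variable R : realType.
Local Notation leb := (@lebesgue_measure R).

Definition L2r (h : R -> R) : Prop :=
  measurable_fun setT h /\ (\int[leb]_x ((h x) ^+ 2)%:E < +oo)%E.

(* a complex function f = fr + i fi is in L^2(R) iff its real and imaginary
   parts are *)
Definition L2c (fr fi : R -> R) : Prop := L2r fr /\ L2r fi.

(* Real and imaginary parts of the integrand f(t) conj(g(t-x)) e^{-2 pi i w t},
   with f = fr + i fi, g = gr + i gi. *)
Definition stft_integrand_re (fr fi gr gi : R -> R) (x w t : R) : R :=
  let P := fr t * gr (t - x) + fi t * gi (t - x) in
  let Q := fi t * gr (t - x) - fr t * gi (t - x) in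
  let th := 2 * pi * w * t in
  P * cos th + Q * sin th.

Definition stft_integrand_im (fr fi gr gi : R -> R) (x w t : R) : R :=
  let P := fr t * gr (t - x) + fi t * gi (t - x) in
  let Q := fi t * gr (t - x) - fr t * gi (t - x) in
  let th := 2 * pi * w * t in
  Q * cos th - P * sin th.

(* U = Re V(f,g), W = Im V(f,g), as functions of (x, omega) *)
Definition stftU (fr fi gr gi : R -> R) (p : R * R) : R :=
  Rintegral leb setT (stft_integrand_re fr fi gr gi p.1 p.2).
Definition stftW (fr fi gr gi : R -> R) (p : R * R) : R :=
  Rintegral leb setT (stft_integrand_im fr fi gr gi p.1 p.2).

Definition dx (F : R * R -> R) (p : R * R) : R := derive1 (fun s => F (s, p.2)) p.1.
Definition dw (F : R * R -> R) (p : R * R) : R := derive1 (fun s => F (p.1, s)) p.2.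

Fixpoint Ck (k : nat) (F : R * R -> R) : Prop :=
  match k with
  | 0 => continuous F
  | k'.+1 => continuous F /\
      (forall p : R * R, derivable (fun s => F (s, p.2)) p.1 1 /\
                         derivable (fun s => F (p.1, s)) p.2 1) /\
      Ck k' (dx F) /\ Ck k' (dw F)
  end.

Definition CkV (k : nat) (U W : R * R -> R) : Prop := Ck k U /\ Ck k W.

Definition detJ (U W : R * R -> R) (p : R * R) : R :=
  dx U p * dw W p - dw U p * dx W p.

(* d psi / d omega for a local phase psi of V = U + iW, given by the
   (phase-independent) formula (U W_w - W U_w)/(U^2 + W^2). *)
Definition dpsi_dw (U W : R * R -> R) (p : R * R) : R :=
  (U p * dw W p - W p * dw U p) / (U p ^+ 2 + W p ^+ 2).

End Defs.

From HB Require Import structures.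
From mathcomp Require Import all_boot all_order all_algebra.
From mathcomp Require Import all_classical all_reals all_analysis.
From mathcomp Require Import ring.
Set Implicit Arguments. Unset Strict Implicit. Unset Printing Implicit Defensive.
Import Order.TTheory GRing.Theory Num.Theory.
Import numFieldNormedType.Exports.
Local Open Scope classical_set_scope.
Local Open Scope ring_scope.

(* Near a simple zero (x0, w0) of V = U + iW, V(x, w0) ~ (x - x0)(U_x + i W_x). Since
   dpsi/dw = (U W_w - W U_w)/(U^2 + W^2) is homogeneous of degree -1 in (U, W),
   (x - x0) dpsi/dw(x, w0) tends to det J_V / (U_x^2 + W_x^2), and the sign of det J_V
   decides the one-sided infinite limits.  Along x = x0, numerator and denominator of
   dpsi/dw both vanish to second order in w - w0: divided by (w - w0)^2, the denominator
   tends to U_w^2 + W_w^2 (nonzero since det J_V is) and, by L'Hopital, the numerator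
   tends to (U_w W_ww - W_w U_ww) / 2, because the derivative of U W_w - W U_w is
   U W_ww - W U_ww. *)

Section one_variable.
Context {R : realType}.
Implicit Types (f df g dg : R -> R) (a q l x : R).

Lemma is_derive_continuous f a l : is_derive a 1 f l -> {for a, continuous f}.
Proof. by move=> fl; apply/differentiable_continuous/derivable1_diffP. Qed.

Lemma cvg_difference_quotient f a l : is_derive a 1 f l ->
  (f x - f a) / (x - a) @[x --> a^'] --> l.
Proof.
move=> fl; have /cvg_ex[/= l' fl'] : derivable f a 1 by [].
have <- : 'D_1 f a = l by exact: derive_val.
have -> : 'D_1 f a = l' by exact: cvg_lim fl'.
apply: cvg_trans fl' => P /= /nbhs_ballP[d d0 dP].
apply/nbhs_ballP; exists d => // x xa xna.
have := dP (x - a); rewrite /ball /= sub0r normrN distrC => /(_ xa).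
rewrite subr_eq0 => /(_ xna).
by rewrite /= -[(x - a)%:A]/((x - a) * 1) mulr1 subrK mulrC.
Qed.

Lemma cvg_div_sub f a l : f a = 0 -> is_derive a 1 f l ->
  f x / (x - a) @[x --> a^'] --> l.
Proof.
by move=> fa0 /cvg_difference_quotient; under eq_fun do rewrite fa0 subr0.
Qed.

Lemma cvg_sub0 a : x - a @[x --> a] --> 0.
Proof. by rewrite -(subrr a); apply: cvgB; [exact: cvg_id | exact: cvg_cst]. Qed.

Lemma at_right_cvgy_mul_sub f a q : 0 < q ->
  (x - a) * f x @[x --> a^'] --> q -> f x @[x --> a^'+] --> +oo.
Proof.
move=> q0 /cvg_dnbhs_at_right fq.
have : q / 2 * (x - a)^-1 @[x --> a^'+] --> +oo.
  apply: gt0_cvgMry; first by rewrite divr_gt0.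
  apply/cvgrVy; first by near=> x; rewrite subr_gt0; near: x; exact: nbhs_right_gt.
  exact/cvg_at_right_filter/cvg_sub0.
apply: ger_cvgy; near=> x.
have xa : 0 < x - a by rewrite subr_gt0; near: x; exact: nbhs_right_gt.
rewrite -[f x](mulKf (lt0r_neq0 xa)) [_ * _^-1]mulrC ler_pM2l ?invr_gt0 //.
by apply: ltW; near: x; apply: (cvgr_gt q) => //; rewrite ltr_pdivrMr // ltr_pMr // ltr1n.
Unshelve. all: by end_near. Qed.

Lemma at_left_cvgNy_mul_sub f a q : 0 < q ->
  (x - a) * f x @[x --> a^'] --> q -> f x @[x --> a^'-] --> -oo.
Proof.
move=> q0 /cvg_dnbhs_at_left fq.
have : q / 2 * (x - a)^-1 @[x --> a^'-] --> -oo.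
  apply: gt0_cvgMrNy; first by rewrite divr_gt0.
  apply/cvgrVNy; first by near=> x; rewrite subr_lt0; near: x; exact: nbhs_left_lt.
  exact/cvg_at_left_filter/cvg_sub0.
apply: ler_cvgNy; near=> x.
have xa : x - a < 0 by rewrite subr_lt0; near: x; exact: nbhs_left_lt.
rewrite -[f x](mulKf (ltr0_neq0 xa)) [_ * _^-1]mulrC ler_nM2l ?invr_lt0 //.
by apply: ltW; near: x; apply: (cvgr_gt q) => //; rewrite ltr_pdivrMr // ltr_pMr // ltr1n.
Unshelve. all: by end_near. Qed.

Lemma lhopital_dnbhs f df g dg a l :
  (forall x, is_derive x 1 f (df x)) -> (forall x, is_derive x 1 g (dg x)) ->
  f x @[x --> a] --> 0 -> g x @[x --> a] --> 0 ->
  (forall x, x != a -> dg x != 0) ->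
  df x / dg x @[x --> a^'] --> l -> f x / g x @[x --> a^'] --> l.
Proof.
move=> fdf gdg f0 g0 dg0 dfgl; apply: (@cvg_at_right_left_dnbhs _ R^o).
  apply: (@lhopital_at_right R f df g dg a (a + 1)) => //.
  - by rewrite ltrDl.
  - exact: cvg_at_right_filter.
  - exact: cvg_at_right_filter.
  - by move=> x; rewrite in_itv /= => /andP[ax _]; rewrite dg0 // gt_eqF.
  - exact: cvg_dnbhs_at_right.
apply: (@lhopital_at_left R f df g dg (a - 1) a) => //.
- by rewrite gtrDl oppr_lt0.
- exact: cvg_at_left_filter.
- exact: cvg_at_left_filter.
- by move=> x; rewrite in_itv /= => /andP[_ xa]; rewrite dg0 // lt_eqF.
- exact: cvg_dnbhs_at_left.
Qed.

Lemma cvg_div_sqr_sub f df a l :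
  (forall x, is_derive x 1 f (df x)) -> f x @[x --> a] --> 0 ->
  df x / (x - a) @[x --> a^'] --> l -> f x / (x - a) ^+ 2 @[x --> a^'] --> l / 2.
Proof.
move=> fdf f0 dfl.
have dsqr x : is_derive x 1 (fun y => (y - a) ^+ 2) (2 * (x - a)).
  apply: is_derive_eq.
  by rewrite subr0 -[_ *: _]/((x - a) * 1) mulr1 -mulr2n mulr_natl.
have sqr0 : (x - a) ^+ 2 @[x --> a] --> 0.
  by under eq_fun do rewrite expr2; rewrite -(mulr0 0); exact: cvgM (cvg_sub0 a) (cvg_sub0 a).
apply: (lhopital_dnbhs fdf dsqr f0 sqr0).
  by move=> x xa; rewrite mulf_neq0 ?pnatr_eq0 // subr_eq0.
by under eq_fun do rewrite invfM [2^-1 * _]mulrC mulrA; exact: cvgM dfl (cvg_cst _).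
Qed.

Lemma is_derive_wronskian (u w du dw : R -> R) (ddu ddw : R) x :
  is_derive x 1 u (du x) -> is_derive x 1 w (dw x) ->
  is_derive x 1 du ddu -> is_derive x 1 dw ddw ->
  is_derive x 1 (fun y => u y * dw y - w y * du y) (u x * ddw - w x * ddu).
Proof.
move=> uu ww duu dww; apply: is_derive_eq.
by rewrite /GRing.scale /=; ring.
Qed.

Lemma cvg_wronskian_div_sqr (u w du dw ddu ddw : R -> R) a :
  (forall x, is_derive x 1 u (du x)) -> (forall x, is_derive x 1 w (dw x)) ->
  (forall x, is_derive x 1 du (ddu x)) -> (forall x, is_derive x 1 dw (ddw x)) ->
  {for a, continuous ddu} -> {for a, continuous ddw} -> u a = 0 -> w a = 0 ->
  (u x * dw x - w x * du x) / (x - a) ^+ 2 @[x --> a^'] -->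
  (du a * ddw a - dw a * ddu a) / 2.
Proof.
move=> uu ww duu dww cddu cddw ua0 wa0.
have wr x := is_derive_wronskian (uu x) (ww x) (duu x) (dww x).
apply: (cvg_div_sqr_sub wr).
  have := is_derive_continuous (wr a).
  by rewrite /prop_for /continuous_at ua0 wa0 !mul0r subrr.
under eq_fun do rewrite mulrBl mulrAC [w _ * _ / _]mulrAC.
apply: cvgB; apply: cvgM; [exact: cvg_div_sub| exact: cvg_within_filter|
  exact: cvg_div_sub | exact: cvg_within_filter].
Qed.

End one_variable.

Section phase_slope.
Context {R : realFieldType}.
Implicit Types u w du dw h : R.

Definition phase_slope u w du dw := (u * dw - w * du) / (u ^+ 2 + w ^+ 2).

Lemma sqrD_eq0 u w : (u ^+ 2 + w ^+ 2 == 0) = (u == 0) && (w == 0).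
Proof. by rewrite paddr_eq0 ?sqr_ge0 // !sqrf_eq0. Qed.

Lemma phase_slope_div u w du dw h :
  phase_slope (u / h) (w / h) du dw = h * phase_slope u w du dw.
Proof.
rewrite /phase_slope; have [->|h0] := eqVneq h 0.
  by rewrite invr0 !mulr0 !mul0r subrr mul0r.
have [/eqP|uw0] := eqVneq (u ^+ 2 + w ^+ 2) 0.
  by rewrite sqrD_eq0 => /andP[/eqP -> /eqP ->]; rewrite !(mul0r, subrr, mulr0).
by rewrite !expr_div_n -mulrDl; field; rewrite uw0.
Qed.

Lemma cvg_phase_slope {T} {F : set_system T} {FF : Filter F}
    (u w du dw : T -> R) u0 w0 du0 dw0 :
  u0 ^+ 2 + w0 ^+ 2 != 0 ->
  u t @[t --> F] --> u0 -> w t @[t --> F] --> w0 ->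
  du t @[t --> F] --> du0 -> dw t @[t --> F] --> dw0 ->
  phase_slope (u t) (w t) (du t) (dw t) @[t --> F] --> phase_slope u0 w0 du0 dw0.
Proof.
move=> uw0 uu ww duu dww; apply: cvgM; first exact: cvgB (cvgM uu dww) (cvgM ww duu).
by apply: cvgV => //; rewrite !expr2; apply: cvgD; exact: cvgM.
Qed.

End phase_slope.

Section partial_derivatives.
Context {R : realType}.
Implicit Types (F : R * R -> R) (k : nat) (p : R * R) (x y : R).

Lemma continuous_partial_x F y : continuous F -> continuous (fun x => F (x, y)).
Proof.
move=> cF x; apply: (@continuous2_cvg _ _ _ _ _ _ _ _ (fun a b => F (a, b))).
- have -> : (fun z : R * R => F (z.1, z.2)) = F by apply: funext => -[].
  exact: cF.
- exact: cvg_id.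
- exact: cvg_cst.
Qed.

Lemma continuous_partial_w F x : continuous F -> continuous (fun y => F (x, y)).
Proof.
move=> cF y; apply: (@continuous2_cvg _ _ _ _ _ _ _ _ (fun a b => F (a, b))).
- have -> : (fun z : R * R => F (z.1, z.2)) = F by apply: funext => -[].
  exact: cF.
- exact: cvg_cst.
- exact: cvg_id.
Qed.

Lemma Ck_continuous k F : Ck k F -> continuous F.
Proof. by case: k => [|k] // []. Qed.

Lemma CkS_Ck k F : Ck k.+1 F -> Ck k F.
Proof.
elim: k F => [|k IHk] F; first by case.
by move=> [cF [dF [/IHk CdxF /IHk CdwF]]].
Qed.

Lemma CkS_dw k F : Ck k.+1 F -> Ck k (dw F).
Proof. by case=> _ [_ []]. Qed.

Lemma CkS_is_derive_x k F x y : Ck k.+1 F ->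
  is_derive x 1 (fun s => F (s, y)) (dx F (x, y)).
Proof.
case=> _ [/(_ (x, y)) [/derivableP dF _] _].
by apply: is_derive_eq; rewrite /dx derive1E.
Qed.

Lemma CkS_is_derive_w k F x y : Ck k.+1 F ->
  is_derive y 1 (fun s => F (x, s)) (dw F (x, y)).
Proof.
case=> _ [/(_ (x, y)) [_ /derivableP dF] _].
by apply: is_derive_eq; rewrite /dw derive1E.
Qed.

End partial_derivatives.

Section phase_derivative_at_zero.
Context {R : realType}.
Variables (U W : R * R -> R) (x0 w0 : R).
Hypotheses (U0 : U (x0, w0) = 0) (W0 : W (x0, w0) = 0).
Hypothesis detJ_neq0 : detJ U W (x0, w0) != 0.

Lemma dpsi_dwE p : dpsi_dw U W p = phase_slope (U p) (W p) (dw U p) (dw W p).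
Proof. by []. Qed.

Lemma sqrD_dx_neq0 : dx U (x0, w0) ^+ 2 + dx W (x0, w0) ^+ 2 != 0.
Proof.
rewrite sqrD_eq0; apply: contra detJ_neq0; rewrite /detJ.
by move=> /andP[/eqP-> /eqP->]; rewrite mul0r mulr0 subrr.
Qed.

Lemma sqrD_dw_neq0 : dw U (x0, w0) ^+ 2 + dw W (x0, w0) ^+ 2 != 0.
Proof.
rewrite sqrD_eq0; apply: contra detJ_neq0; rewrite /detJ.
by move=> /andP[/eqP-> /eqP->]; rewrite mul0r mulr0 subrr.
Qed.

Lemma cvg_mul_sub_dpsi_dw : Ck 1 U -> Ck 1 W ->
  (x - x0) * dpsi_dw U W (x, w0) @[x --> x0^'] -->
  detJ U W (x0, w0) / (dx U (x0, w0) ^+ 2 + dx W (x0, w0) ^+ 2).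
Proof.
move=> CU CW.
have cvg_dw F : Ck 1 F -> dw F (x, w0) @[x --> x0^'] --> dw F (x0, w0).
  move/CkS_dw/Ck_continuous/(continuous_partial_x (y := w0))/(_ x0).
  exact: cvg_within_filter.
have -> : detJ U W (x0, w0) / (dx U (x0, w0) ^+ 2 + dx W (x0, w0) ^+ 2) =
    phase_slope (dx U (x0, w0)) (dx W (x0, w0)) (dw U (x0, w0)) (dw W (x0, w0)).
  by rewrite /phase_slope /detJ [dw U _ * _]mulrC.
under eq_fun do rewrite dpsi_dwE -phase_slope_div.
apply: cvg_phase_slope sqrD_dx_neq0 _ _ (cvg_dw U CU) (cvg_dw W CW).
  exact: cvg_div_sub U0 (CkS_is_derive_x x0 w0 CU).
exact: cvg_div_sub W0 (CkS_is_derive_x x0 w0 CW).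
Qed.

Lemma cvg_dpsi_dw_w : Ck 2 U -> Ck 2 W ->
  dpsi_dw U W (x0, w) @[w --> w0^'] -->
  ((dw U (x0, w0) * dw (dw W) (x0, w0) - dw W (x0, w0) * dw (dw U) (x0, w0)) / 2) /
    (dw U (x0, w0) ^+ 2 + dw W (x0, w0) ^+ 2).
Proof.
move=> CU CW.
have d2_cont F : Ck 2 F -> {for w0, continuous (fun w => dw (dw F) (x0, w))}.
  by move=> /CkS_dw/CkS_dw/Ck_continuous/(continuous_partial_w (x := x0)); apply.
have num := cvg_wronskian_div_sqr (CkS_is_derive_w x0 ^~ CU)
  (CkS_is_derive_w x0 ^~ CW) (CkS_is_derive_w x0 ^~ (CkS_dw CU))
  (CkS_is_derive_w x0 ^~ (CkS_dw CW)) (d2_cont U CU) (d2_cont W CW) U0 W0.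
have cvgU := cvg_div_sub U0 (CkS_is_derive_w x0 w0 CU).
have cvgW := cvg_div_sub W0 (CkS_is_derive_w x0 w0 CW).
have den : (U (x0, w) ^+ 2 + W (x0, w) ^+ 2) / (w - w0) ^+ 2 @[w --> w0^'] -->
    dw U (x0, w0) ^+ 2 + dw W (x0, w0) ^+ 2.
  under eq_fun do rewrite mulrDl -!expr_div_n.
  by rewrite !expr2; exact: cvgD (cvgM cvgU cvgU) (cvgM cvgW cvgW).
apply: cvg_trans (cvgM num (cvgV sqrD_dw_neq0 den)).
apply: near_eq_cvg; near=> w.
have ww0 : (w - w0) ^+ 2 != 0 by rewrite sqrf_eq0 subr_eq0; near: w; exact: nbhs_dnbhs_neq.
by rewrite dpsi_dwE /phase_slope /= invf_div mulrA divfK.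
Unshelve. all: by end_near. Qed.

End phase_derivative_at_zero.

Theorem mainTheorem7 (R : realType) (fr fi gr gi : R -> R) (x0 w0 : R) :
  L2c fr fi -> L2c gr gi ->
  let U := stftU fr fi gr gi in
  let W := stftW fr fi gr gi in
  U (x0, w0) = 0 -> W (x0, w0) = 0 ->
  detJ U W (x0, w0) != 0 ->
  (CkV 2 U W ->
     (0 < detJ U W (x0, w0) ->
        dpsi_dw U W (x, w0) @[x --> x0^'-] --> -oo /\
        dpsi_dw U W (x, w0) @[x --> x0^'+] --> +oo) /\
     (detJ U W (x0, w0) < 0 ->
        dpsi_dw U W (x, w0) @[x --> x0^'-] --> +oo /\
        dpsi_dw U W (x, w0) @[x --> x0^'+] --> -oo)) /\
  (CkV 3 U W ->
     exists c' : R, dpsi_dw U W (x0, w) @[w --> w0^'] --> c').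
Proof.
move=> _ _ U W U0 W0 det0; split; last first.
  by move=> [/CkS_Ck CU /CkS_Ck CW]; eexists; exact: cvg_dpsi_dw_w.
move=> [/CkS_Ck CU /CkS_Ck CW].
have := cvg_mul_sub_dpsi_dw U0 W0 det0 CU CW.
have sqrD_gt0 : 0 < dx U (x0, w0) ^+ 2 + dx W (x0, w0) ^+ 2.
  by rewrite lt_def sqrD_dx_neq0 // addr_ge0 ?sqr_ge0.
set q := _ / _ => lim; split=> [det_gt0 | det_lt0].
  have q_gt0 : 0 < q by rewrite divr_gt0.
  by split; [exact: at_left_cvgNy_mul_sub q_gt0 lim | exact: at_right_cvgy_mul_sub q_gt0 lim].
have Nq_gt0 : 0 < - q by rewrite -mulNr divr_gt0 ?oppr_gt0.
have limN : (x - x0) * - dpsi_dw U W (x, w0) @[x --> x0^'] --> - q.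
  by under eq_fun do rewrite mulrN; exact: cvgN lim.
by split; [apply/cvgNrNy; exact: at_left_cvgNy_mul_sub Nq_gt0 limN |
  apply/cvgNry; exact: at_right_cvgy_mul_sub Nq_gt0 limN].
Qed.
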